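(* Let $\mathcal{G}=(\mathcal{V},E)$ be an undirected graph, $\mathcal{V}=\{1,\dots,N\}$, and let $X=(X_1,\dots,X_N)$ be a Markov random field on $\mathcal{G}$ with each $X_i$ taking values in a finite alphabet $\mathcal{X}_i$. Let $g_i:\mathcal{X}_i\to\mathcal{Y}_i$ be functions and $Y_i=g_i(X_i)$, $Y=(Y_1,\dots,Y_N)$. If for every $i\in\mathcal{V}$ $$H(Y_i\mid Y_{\mathcal{N}_i})=H(Y_i\mid X_{\mathcal{N}_i}),$$ then $Y$ is a Markov random field on $\mathcal{G}$.
   Context: $\mathcal{N}_i=\{j\neq i:\{i,j\}\in E\}$; for $A\subseteq\mathcal{V}$, $X_A=(X_j,j\in A)$. $X$ is a Markov random field on $\mathcal{G}$ if for every $i$, $p_{X_i|X_{\mathcal{V}\setminus\{i\}}}=p_{X_i|X_{\mathcal{N}_i}}$. $H$ denotes Shannon (conditional) entropy. *)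

From HB Require Import structures.
From mathcomp Require Import all_boot all_order all_algebra.
From mathcomp Require Import reals exp.
Set Implicit Arguments. Unset Strict Implicit. Unset Printing Implicit Defensive.
Import Order.TTheory GRing.Theory Num.Theory.
Local Open Scope ring_scope.

Definition is_pmf (R : realType) (Om : finType) (P : Om -> R) : Prop :=
  (forall w, 0 <= P w) /\ \sum_(w : Om) P w = 1.

Definition Pr (R : realType) (Om : finType) (P : Om -> R) (A : {set Om}) : R :=
  \sum_(w in A) P w.

Definition cPr (R : realType) (Om : finType) (P : Om -> R) (A B : {set Om}) : R :=
  Pr P (A :&: B) / Pr P B.

Definition ev (N : nat) (Om : finType) (T : 'I_N -> eqType)
  (Z : forall j : 'I_N, Om -> T j) (S : {set 'I_N}) (w0 : Om) : {set Om} :=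
  [set w | [forall j in S, Z j w == Z j w0]].

Definition nbhd (N : nat) (e : rel 'I_N) (i : 'I_N) : {set 'I_N} :=
  [set j | (j != i) && e i j].

(* Z is a Markov random field on the graph (V = 'I_N, e):
   for every i, p_{Z_i | Z_{V \ {i}}} = p_{Z_i | Z_{N_i}}, i.e. for every
   conditioning value of positive probability and every value a of Z_i,
   P(Z_i = a | Z_{V\{i}} = z) = P(Z_i = a | Z_{N_i} = z_{N_i}). *)
Definition MRF (R : realType) (N : nat) (Om : finType) (P : Om -> R)
  (e : rel 'I_N) (T : 'I_N -> eqType) (Z : forall j : 'I_N, Om -> T j) : Prop :=
  forall (i : 'I_N) (w0 : Om), 0 < Pr P (ev Z (~: [set i]) w0) ->
    forall a : T i,
      cPr P [set w | Z i w == a] (ev Z (~: [set i]) w0)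
      = cPr P [set w | Z i w == a] (ev Z (nbhd e i) w0).

(* Shannon conditional entropy H(U | Z_S) (natural log), written as the
   expectation E[- log p(U | Z_S)] = - sum_w P(w) log P(U = U(w) | Z_S = Z_S(w)). *)
Definition condH (R : realType) (N : nat) (Om : finType) (P : Om -> R)
  (A : eqType) (U : Om -> A) (T : 'I_N -> eqType) (Z : forall j : 'I_N, Om -> T j)
  (S : {set 'I_N}) : R :=
  - \sum_(w : Om) P w * ln (cPr P [set w' | U w' == U w] (ev Z S w)).

(* Write X_N, Y_N for the restrictions of X, Y to the neighbourhood of i.
   Since Y_N is a function of X_N, the cells of X_N refine those of Y_N, and
   H(Y_i | Y_N) - H(Y_i | X_N) = E[ln (P(Y_i | X_N) / P(Y_i | Y_N))] is
   nonnegative by Gibbs' inequality, with equality only if the two conditional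
   laws of Y_i coincide almost surely.  Hence, by the Markov property of X,
   P(Y_i = a | X_{V\i}) = P(Y_i = a | X_N) = P(Y_i = a | Y_N), and averaging
   over the cells of X_{V\i} inside a cell of Y_{V\i} yields
   P(Y_i = a | Y_{V\i}) = P(Y_i = a | Y_N). *)
From HB Require Import structures.
From mathcomp Require Import all_boot all_order all_algebra.
From mathcomp Require Import reals exp.
From mathcomp Require Import ring lra.
Set Implicit Arguments. Unset Strict Implicit. Unset Printing Implicit Defensive.
Import Order.TTheory GRing.Theory Num.Theory.
Local Open Scope ring_scope.

Section FiniteProbability.
Variables (R : realType) (Om : finType) (P : Om -> R).
Hypothesis P_ge0 : forall w, 0 <= P w.
Hypothesis P_sum1 : \sum_w P w = 1.

Lemma PrE (A : {set Om}) : Pr P A = \sum_w (w \in A)%:R * P w.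
Proof.
rewrite /Pr big_mkcond; apply: eq_bigr => w _.
by case: (w \in A); rewrite ?mul1r ?mul0r.
Qed.

Lemma Pr_ge0 (A : {set Om}) : 0 <= Pr P A.
Proof. exact: sumr_ge0. Qed.

Lemma le_Pr (A B : {set Om}) : A \subset B -> Pr P A <= Pr P B.
Proof.
move=> sAB; rewrite !PrE; apply: ler_sum => w _.
have [wA|] := boolP (w \in A); first by rewrite (subsetP sAB _ wA).
by rewrite mul0r; case: (w \in B); rewrite ?mul1r ?mul0r.
Qed.

Lemma Pr_gt0 (A : {set Om}) w : w \in A -> 0 < P w -> 0 < Pr P A.
Proof.
move=> wA Pw; rewrite /Pr (bigD1 w) //=; apply: (lt_le_trans Pw).
by rewrite lerDl sumr_ge0.
Qed.

Lemma Pr_gt0P (A : {set Om}) : 0 < Pr P A -> exists2 w, w \in A & 0 < P w.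
Proof.
case: (pickP [pred w | (w \in A) && (0 < P w)]) => [w /andP[]|noA]; first by exists w.
suff -> : Pr P A = 0 by rewrite ltxx.
apply: big1 => w wA; move/negbT: (noA w); rewrite /= wA -leNgt => Pw_le0.
by apply/eqP; rewrite eq_le Pw_le0 P_ge0.
Qed.

Lemma divff_le1 (x : R) : x / x <= 1.
Proof. by have [->|x0] := eqVneq x 0; rewrite ?mul0r ?divff. Qed.

(* Gibbs' inequality [ln x <= x - 1], applied to [x = p / q], in its equality case. *)
Lemma gibbs_equality (p q : Om -> R) :
    (forall w, 0 < P w -> 0 < p w /\ 0 < q w) ->
    \sum_w P w * (p w / q w) <= 1 ->
    \sum_w P w * ln (p w) = \sum_w P w * ln (q w) ->
  forall w, 0 < P w -> p w = q w.
Proof.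
move=> pq_gt0 ratio_le1 ln_eq.
pose gap w := P w * (p w / q w - 1 - (ln (p w) - ln (q w))).
have gap_ln w : 0 < P w -> gap w = P w * (p w / q w - 1 - ln (p w / q w)).
  by move=> Pw; have [p0 q0] := pq_gt0 w Pw; rewrite ln_div ?posrE.
have gap_ge0 w : 0 <= gap w.
  have [P0|Pw] := eqVneq (P w) 0; first by rewrite /gap P0 mul0r.
  have {}Pw : 0 < P w by rewrite lt_def Pw P_ge0.
  have [p0 q0] := pq_gt0 w Pw; rewrite gap_ln // mulr_ge0 ?P_ge0 //.
  by have := expR_ge1Dx (ln (p w / q w)); rewrite lnK ?posrE ?divr_gt0 //; lra.
have gap_sum0 : \sum_w gap w = 0.
  have gap_sumE : \sum_w gap w = \sum_w P w * (p w / q w) - \sum_w P w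
                           - (\sum_w P w * ln (p w) - \sum_w P w * ln (q w)).
    by rewrite -!sumrB; apply: eq_bigr => w _; rewrite /gap; ring.
  apply/eqP; rewrite eq_le sumr_ge0 // andbT gap_sumE ln_eq P_sum1; lra.
move=> w Pw; have [p0 q0] := pq_gt0 w Pw.
have /eqP := psumr_eq0P (fun w _ => gap_ge0 w) gap_sum0 (i := w) isT.
rewrite gap_ln // mulf_eq0 gt_eqF //= => /eqP gap_w0.
have [ratio1|ratio_ne1] := eqVneq (p w / q w) 1.
  by rewrite -(divfK (lt0r_neq0 q0) (p w)) ratio1 mul1r.
have ln_ne0 : ln (p w / q w) != 0 by rewrite ln_eq0 ?divr_gt0.
by have := expR_gt1Dx ln_ne0; rewrite lnK ?posrE ?divr_gt0 //; lra.
Qed.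

End FiniteProbability.

Section ClassPartition.
Variables (R : realType) (Om : finType) (P : Om -> R) (D : Om -> {set Om}).
Hypothesis P_ge0 : forall w, 0 <= P w.
Hypothesis D_self : forall w, w \in D w.
Hypothesis D_eq : forall w v, v \in D w -> D v = D w.

Lemma D_sym w v : v \in D w -> w \in D v.
Proof. by move=> vDw; rewrite (D_eq vDw) D_self. Qed.

Lemma Pr_setI_tower (E F : {set Om}) : (forall u, u \in E -> D u \subset E) ->
  Pr P (F :&: E) = \sum_v (v \in E)%:R * P v * cPr P F (D v).
Proof.
move=> E_union; rewrite /cPr.
under eq_bigr => v _ do rewrite PrE big_distrl big_distrr /=.
rewrite exchange_big PrE /=; apply: eq_bigr => u _.
transitivity (\sum_v (u \in F :&: E)%:R * P u * ((v \in D u)%:R * P v / Pr P (D u))).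
  rewrite -big_distrr /= -big_distrl /= -PrE.
  have [uFE|] := boolP (u \in F :&: E); last by rewrite !mul0r.
  have [->|Pu] := eqVneq (P u) 0; first by rewrite !mulr0 mul0r.
  have {}Pu : 0 < P u by rewrite lt_def Pu P_ge0.
  by rewrite divff ?mulr1 // lt0r_neq0 // (Pr_gt0 P_ge0 (D_self u)).
apply: eq_bigr => v _; have [vDu|vNDu] := boolP (v \in D u).
  have /setP/(_ u) := D_eq vDu; rewrite D_self => uDv.
  have [uE|uNE] := boolP (u \in E).
    by rewrite !inE (subsetP (E_union u uE) v vDu) uE -uDv /= (D_eq vDu); ring.
  have vNE : v \notin E by apply: contra uNE => vE; rewrite (subsetP (E_union v vE)).
  by rewrite !inE (negbTE uNE) (negbTE vNE) andbF /=; ring.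
rewrite !inE (negbTE (contra (@D_sym v u) vNDu)) andbF /=; ring.
Qed.

Lemma cPr_const_union (E F : {set Om}) (c : R) : Pr P E != 0 ->
    (forall u, u \in E -> D u \subset E) ->
    (forall v, v \in E -> 0 < P v -> cPr P F (D v) = c) ->
  cPr P F E = c.
Proof.
move=> PE_neq0 E_union cPr_c; rewrite /cPr (Pr_setI_tower _ E_union).
apply: (canLR (mulfK PE_neq0)); rewrite PrE big_distrr /=.
apply: eq_bigr => v _; have [vE|] := boolP (v \in E); last by rewrite !mul0r mulr0.
have [->|Pv] := eqVneq (P v) 0; first by rewrite !mulr0 mul0r.
by rewrite cPr_c ?lt_def ?Pv ?P_ge0 // mulrC.
Qed.

End ClassPartition.

Section Refinement.
Variables (R : realType) (Om : finType) (P : Om -> R).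
Hypothesis P_ge0 : forall w, 0 <= P w.
Hypothesis P_sum1 : \sum_w P w = 1.
Variables (T : eqType) (U : Om -> T) (Df Dc : Om -> {set Om}).
Hypothesis Df_self : forall w, w \in Df w.
Hypothesis Dc_self : forall w, w \in Dc w.
Hypothesis Df_eq : forall w v, v \in Df w -> Df v = Df w.
Hypothesis Dc_eq : forall w v, v \in Dc w -> Dc v = Dc w.
Hypothesis Df_sub : forall w, Df w \subset Dc w.

Local Notation A w := [set w' | U w' == U w].
Local Notation p w := (cPr P (A w) (Dc w)).
Local Notation q w := (cPr P (A w) (Df w)).
(* [K u v]: draw u from P, then v from P conditioned on the coarse cell of u. *)
Local Notation K u v := (P u * P v * (v \in Dc u)%:R / Pr P (Dc u)).

Lemma sum_cPr_ratioE : \sum_w P w * (p w / q w) =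
  \sum_u \sum_v K u v * (Pr P (A v :&: Df u) / Pr P (A v :&: Df u)).
Proof.
have class_swap w u v : (u \in Df w) && (v \in A w :&: Dc w) =
                        (w \in A v :&: Df u) && (v \in Dc u).
  rewrite !inE (eq_sym (U w)); have [uDw|uNDw] /= := boolP (u \in Df w).
    by rewrite (D_sym Df_self Df_eq uDw) (Dc_eq (subsetP (Df_sub w) _ uDw)) andbT.
  by rewrite (negbTE (contra (D_sym Df_self Df_eq (w:=u) (v:=w)) uNDw)) andbF.
have termE w u v :
    ((u \in Df w) && (v \in A w :&: Dc w))%:R *
      (P w * P u * P v / (Pr P (Dc w) * Pr P (A w :&: Df w)))
    = K u v * ((w \in A v :&: Df u)%:R * P w / Pr P (A v :&: Df u)).
  rewrite class_swap; have [wAD|] := boolP (w \in A v :&: Df u); last by rewrite !mul0r mulr0.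
  move: (wAD); rewrite !inE => /andP[/eqP Uwv wDu].
  have -> : A w = A v by apply/setP => x; rewrite !inE Uwv.
  rewrite (Df_eq wDu) (Dc_eq (subsetP (Df_sub u) _ wDu)) invfM /=; ring.
transitivity (\sum_w \sum_u \sum_v ((u \in Df w) && (v \in A w :&: Dc w))%:R *
      (P w * P u * P v / (Pr P (Dc w) * Pr P (A w :&: Df w)))).
  apply: eq_bigr => w _.
  have -> : P w * (p w / q w) = Pr P (Df w) * Pr P (A w :&: Dc w) *
      (P w / (Pr P (Dc w) * Pr P (A w :&: Df w))) by rewrite /cPr !invfM invrK; ring.
  rewrite (PrE P (Df w)) (PrE P (A w :&: Dc w)) !big_distrl /=; apply: eq_bigr => u _.
  rewrite !big_distrr /= !big_distrl /=; apply: eq_bigr => v _.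
  by case: (u \in Df w); case: (v \in _) => /=; ring.
under eq_bigr => w _ do under eq_bigr => u _ do under eq_bigr => v _ do rewrite termE.
rewrite exchange_big; apply: eq_bigr => u _; rewrite exchange_big; apply: eq_bigr => v _.
by rewrite -big_distrr /= -big_distrl /= -PrE.
Qed.

Lemma sum_kernel_eq1 : \sum_u \sum_v K u v = 1.
Proof.
rewrite -[RHS]P_sum1; apply: eq_bigr => u _.
have -> : \sum_v K u v = P u / Pr P (Dc u) * \sum_v (v \in Dc u)%:R * P v.
  by rewrite big_distrr /=; apply: eq_bigr => v _; ring.
have [->|Pu] := eqVneq (P u) 0; first by rewrite !mul0r.
by rewrite -PrE divfK // lt0r_neq0 // (Pr_gt0 P_ge0 (Dc_self u)) // lt_def Pu P_ge0.
Qed.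

Lemma kernel_ge0 u v : 0 <= K u v.
Proof. by rewrite !mulr_ge0 ?invr_ge0 ?Pr_ge0 ?ler0n. Qed.

Lemma sum_cPr_ratio_le1 : \sum_w P w * (p w / q w) <= 1.
Proof.
rewrite sum_cPr_ratioE -[X in _ <= X]sum_kernel_eq1.
apply: ler_sum => u _; apply: ler_sum => v _.
by rewrite -[X in _ <= X]mulr1 ler_wpM2l ?kernel_ge0 ?divff_le1.
Qed.

Hypothesis cond_entropy_eq : \sum_w P w * ln (p w) = \sum_w P w * ln (q w).

Lemma cPr_own_value_gt0 w : 0 < P w -> 0 < p w /\ 0 < q w.
Proof.
move=> Pw; split; apply: divr_gt0; apply: (Pr_gt0 P_ge0 _ Pw);
  by rewrite ?inE ?eqxx ?Dc_self ?Df_self.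
Qed.

Lemma cPr_refine_eq_at w : 0 < P w -> q w = p w.
Proof.
move=> Pw; apply/esym; apply: (gibbs_equality P_ge0 P_sum1 _ sum_cPr_ratio_le1) => //.
exact: cPr_own_value_gt0.
Qed.

Lemma sum_cPr_ratio_eq1 : \sum_w P w * (p w / q w) = 1.
Proof.
rewrite -[RHS]P_sum1; apply: eq_bigr => w _.
have [->|Pw] := eqVneq (P w) 0; first by rewrite mul0r.
have {}Pw : 0 < P w by rewrite lt_def Pw P_ge0.
have [_ q_gt0] := cPr_own_value_gt0 Pw.
by rewrite -(cPr_refine_eq_at Pw) divff ?mulr1 // lt0r_neq0.
Qed.

Lemma Pr_refine_value_gt0 u v : 0 < P u -> 0 < P v -> v \in Dc u ->
  0 < Pr P (A v :&: Df u).
Proof.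
move=> Pu Pv vDu.
(* Equality in [sum_cPr_ratio_le1] forces each ratio with [K u v != 0] to be 1. *)
pose slack u' v' := K u' v' * (1 - Pr P (A v' :&: Df u') / Pr P (A v' :&: Df u')).
have slack_ge0 u' v' : 0 <= slack u' v'.
  by rewrite mulr_ge0 ?kernel_ge0 // subr_ge0 divff_le1.
have slack_sum0 : \sum_u \sum_v slack u v = 0.
  transitivity (\sum_u \sum_v K u v -
     \sum_u \sum_v K u v * (Pr P (A v :&: Df u) / Pr P (A v :&: Df u))).
    rewrite -sumrB; apply: eq_bigr => u' _; rewrite -sumrB.
    by apply: eq_bigr => v' _; rewrite /slack; ring.
  by rewrite sum_kernel_eq1 -sum_cPr_ratioE sum_cPr_ratio_eq1 subrr.
have /eqP := psumr_eq0P (fun v' _ => slack_ge0 u v')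
  (psumr_eq0P (fun u' _ => sumr_ge0 _ (fun v' _ => slack_ge0 u' v')) slack_sum0 (i := u) isT)
  (i := v) isT.
have K_neq0 : K u v != 0.
  by rewrite vDu mulr1 !mulf_neq0 ?invr_neq0 ?lt0r_neq0 // (Pr_gt0 P_ge0 (Dc_self u)).
rewrite mulf_eq0 (negbTE K_neq0) subr_eq0 /= => /eqP ratio1.
rewrite lt_def Pr_ge0 // andbT; apply/eqP => Pr0.
by move: ratio1; rewrite Pr0 mul0r => /eqP; rewrite oner_eq0.
Qed.

Lemma cPr_refine_eq u a : 0 < P u ->
  cPr P [set w | U w == a] (Df u) = cPr P [set w | U w == a] (Dc u).
Proof.
move=> Pu; set Aa := [set w | U w == a].
have [PrAc0|PrAc_neq0] := eqVneq (Pr P (Aa :&: Dc u)) 0.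
  have PrAf0 : Pr P (Aa :&: Df u) = 0.
    by apply/eqP; rewrite eq_le Pr_ge0 // andbT -PrAc0 le_Pr // setIS.
  by rewrite /cPr PrAc0 PrAf0 !mul0r.
have PrAc_gt0 : 0 < Pr P (Aa :&: Dc u) by rewrite lt0r PrAc_neq0 Pr_ge0.
have [v] := Pr_gt0P P_ge0 PrAc_gt0; rewrite !inE => /andP[/eqP Uva vDu] Pv.
have [w] := Pr_gt0P P_ge0 (Pr_refine_value_gt0 Pu Pv vDu).
rewrite !inE => /andP[/eqP Uwv wDu] Pw.
have Aw : A w = Aa by apply/setP => x; rewrite !inE Uwv Uva.
by have := cPr_refine_eq_at Pw; rewrite Aw (Df_eq wDu) (Dc_eq (subsetP (Df_sub u) _ wDu)).
Qed.

End Refinement.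

Lemma cPr_comp_sum (R : realType) (Om F : finType) (T : eqType) (P : Om -> R)
    (Z : Om -> F) (h : F -> T) (a : T) (B : {set Om}) :
  cPr P [set w | h (Z w) == a] B = \sum_(b : F) (h b == a)%:R * cPr P [set w | Z w == b] B.
Proof.
rewrite /cPr; under eq_bigr => b _ do rewrite mulrA.
rewrite -big_distrl /=; congr (_ / _).
rewrite PrE; under eq_bigr => b _ do rewrite PrE big_distrr /=.
rewrite exchange_big /=; apply: eq_bigr => w _.
rewrite (bigD1 (Z w)) //= big1 ?addr0.
  by rewrite !inE eqxx /=; case: (h (Z w) == a); case: (w \in B) => /=; ring.
by move=> b b_neq_Zw; rewrite !inE (eq_sym (Z w)) (negbTE b_neq_Zw) /=; ring.
Qed.

Section Events.
Variables (N : nat) (Om : finType) (T : 'I_N -> eqType) (Z : forall j : 'I_N, Om -> T j).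

Lemma ev_self (S : {set 'I_N}) w : w \in ev Z S w.
Proof. by rewrite inE; apply/forallP => j; apply/implyP. Qed.

Lemma ev_eq (S : {set 'I_N}) w v : v \in ev Z S w -> ev Z S v = ev Z S w.
Proof.
rewrite inE => /forallP v_w; apply/setP => x; rewrite !inE.
by apply: eq_forallb => j; apply: implyb_id2l => jS; move/implyP/(_ jS)/eqP: (v_w j) => ->.
Qed.

Lemma ev_subset (S S' : {set 'I_N}) w : S' \subset S -> ev Z S w \subset ev Z S' w.
Proof.
move=> sS; apply/subsetP => x; rewrite !inE => /forallP x_w.
by apply/forallP => j; apply/implyP => jS; apply: (implyP (x_w j)); apply: (subsetP sS).
Qed.

Lemma ev_comp (T' : 'I_N -> eqType) (g : forall j, T j -> T' j) (S : {set 'I_N}) w :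
  ev Z S w \subset ev (fun j w => g j (Z j w)) S w.
Proof.
apply/subsetP => x; rewrite !inE => /forallP x_w.
by apply/forallP => j; apply/implyP => jS; move/implyP/(_ jS)/eqP: (x_w j) => ->.
Qed.

End Events.

Theorem proposition2 (R : realType) (N : nat) (e : rel 'I_N) (e_sym : symmetric e)
  (Om : finType) (P : Om -> R) (hP : is_pmf P)
  (Xa : 'I_N -> finType) (X : forall i : 'I_N, Om -> Xa i)
  (Ya : 'I_N -> eqType) (g : forall i : 'I_N, Xa i -> Ya i) :
  MRF P e X ->
  (forall i : 'I_N,
     condH P (fun w => g i (X i w)) (fun j w => g j (X j w)) (nbhd e i)
     = condH P (fun w => g i (X i w)) X (nbhd e i)) ->
  MRF P e (fun j w => g j (X j w)).
Proof.
move=> mrfX cond_entropy_eq i w0 PrYcell_gt0 a; have [P_ge0 P_sum1] := hP.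
set Y := fun j w => g j (X j w).
have nbhd_sub : nbhd e i \subset ~: [set i] by apply/subsetP => j; rewrite !inE => /andP[].
apply: (cPr_const_union P_ge0 (ev_self X _) (@ev_eq _ _ _ X _)).
- exact: lt0r_neq0.
- by move=> u uE; rewrite -(ev_eq uE); apply: ev_comp.
move=> v vE Pv.
have PrXv_gt0 := Pr_gt0 P_ge0 (ev_self X (~: [set i]) v) Pv.
rewrite cPr_comp_sum; under eq_bigr => b _ do rewrite mrfX //; rewrite -cPr_comp_sum.
rewrite (cPr_refine_eq P_ge0 P_sum1 (ev_self X _) (ev_self Y _) (@ev_eq _ _ _ X _)
  (@ev_eq _ _ _ Y _) (fun w => ev_comp X g _ w) (oppr_inj (cond_entropy_eq i)) a Pv).
by rewrite (ev_eq (subsetP (ev_subset Y w0 nbhd_sub) v vE)).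
Qed.
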